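(* Let $\mathcal{F}=(M,\{A^u\}_{u\in Q})$ be an FDFA and $\overline{B}$ the Büchi automaton constructed from $\mathcal{F}$ as in the context. For every $\omega$-word $w\in UP(L(\overline{B}))$ there exist a decomposition $(u,v)$ of $w$ (i.e., $u\in\Sigma^*$, $v\in\Sigma^+$, $w=uv^\omega$) and $n\geq1$ such that $v=v_1v_2\cdots v_n$ and for all $i\in\{1,\dots,n\}$, $v_i\in L(A^{M(u)})$ and $M(uv_i)=M(u)$.
   Context: $\Sigma$ is a finite alphabet. For a complete DFA $A$ and finite word $w$, $A(w)$ is the state reached from the initial state on $w$. An FDFA is $\mathcal{F}=(M,\{A^q\}_{q\in Q})$ with $M=(\Sigma,Q,q_0,\delta)$ a complete DFA without accepting states and each $A^q=(\Sigma,Q_q,s_q,F_q,\delta_q)$ a complete DFA. For an $\omega$-language $L'$, $UP(L')$ is the set of ultimately periodic words in $L'$. Construction of $\overline{B}$: for a DFA $D$ and states $s,t$, $D^s_t$ is $D$ with initial state $s$ and accepting set $\{t\}$. For $u\in Q$, $v\in F_u$ let $\overline{P}_{(u,v)}=M^u_u\times(A^u)^{s_u}_v$ (synchronous product, single accepting state $f_P$, initial state $s_P$, states $Q_P$, transitions $\delta_P$). From it form the Büchi automaton with $\epsilon$-transitions $(\Sigma,Q_P\cup\{f\},s_P,\{f\},\delta_P\cup\{(f,\epsilon,s_P),(f_P,\epsilon,f)\})$ with $f$ fresh. $\overline{B}$ has state set $Q$ plus disjoint copies of these automata for all $u\in Q$, $v\in F_u$; initial state $q_0$; accepting states the fresh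 states $f$; transitions $\delta$, those of the components, and $\epsilon$-transitions from $u\in Q$ to the initial state of the component for $(u,v)$. An infinite word is accepted if some run (with $\epsilon$-moves) reading it visits accepting states infinitely often. *)

From HB Require Import structures.
From mathcomp Require Import all_boot.
Set Implicit Arguments. Unset Strict Implicit. Unset Printing Implicit Defensive.

(* An FDFA over the finite alphabet Sigma: a leading complete DFA
   M = (Sigma, Q, q0, delta) without accepting states, and for every q : Q a
   complete progress DFA A^q = (Sigma, Q_q, s_q, F_q, delta_q). *)
Record fdfa (Sigma : finType) := FDFA {
  lstate : finType;
  linit : lstate;
  ltrans : lstate -> Sigma -> lstate;
  pstate : lstate -> finType;
  pinit : forall q, pstate q;
  ptrans : forall q, pstate q -> Sigma -> pstate q;
  pacc : forall q, {set pstate q}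
}.

Section FDFA.
Variables (Sigma : finType) (F : fdfa Sigma).

Definition Mrun (w : seq Sigma) : lstate F := foldl (@ltrans _ F) (linit F) w.

Definition Arun (q : lstate F) (w : seq Sigma) : pstate q :=
  foldl (@ptrans _ F q) (pinit q) w.
Definition Alang (q : lstate F) (w : seq Sigma) : Prop := Arun q w \in pacc q.

(* States of the Buchi automaton B-bar: the states of Q, plus for every
   u : Q and v \in F_u a disjoint copy of Q_P \cup {f}, where
   Q_P = Q x Q_u is the state set of P_(u,v) = M^u_u x (A^u)^{s_u}_v;
   [Some (p, t)] is the product state (p, t), [None] is the fresh state f. *)
Inductive bstate :=
| BQ (q : lstate F)
| BP (u : lstate F) (v : pstate u) (hv : v \in pacc u)
     (p : option (lstate F * pstate u)).

(* Transitions of B-bar; label [None] is an epsilon-move. *)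
Inductive bstep : bstate -> option Sigma -> bstate -> Prop :=
| bst_M q a : bstep (BQ q) (Some a) (BQ (ltrans q a))
| bst_enter u (v : pstate u) (hv : v \in pacc u) :
    bstep (BQ u) None (@BP u v hv (Some (u, pinit u)))
| bst_P u (v : pstate u) (hv : v \in pacc u) p t a :
    bstep (@BP u v hv (Some (p, t))) (Some a)
          (@BP u v hv (Some (ltrans p a, ptrans t a)))
| bst_fin u (v : pstate u) (hv : v \in pacc u) :              (* epsilon from f_P = (u, v) to f *)
    bstep (@BP u v hv (Some (u, v))) None (@BP u v hv None)
| bst_loop u (v : pstate u) (hv : v \in pacc u) :
    bstep (@BP u v hv None) None (@BP u v hv (Some (u, pinit u))).

Definition binit : bstate := BQ (linit F).

Definition baccepting (x : bstate) : Prop :=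
  match x with BP _ _ _ None => True | _ => False end.

(* A run with epsilon-moves reading the infinite word w: a sequence of states
   r and labels l with r 0 the initial state, consecutive steps, and the
   non-epsilon labels, in order, spelling exactly w (through the strictly
   increasing position map pos). *)
Definition brun (w : nat -> Sigma) (r : nat -> bstate)
    (l : nat -> option Sigma) : Prop :=
  [/\ r 0 = binit,
      forall i, bstep (r i) (l i) (r i.+1) &
      exists pos : nat -> nat,
        [/\ forall k, pos k < pos k.+1,
            forall k, l (pos k) = Some (w k) &
            forall j, (forall k, pos k <> j) -> l j = None]].

Definition baccepts (w : nat -> Sigma) : Prop :=
  exists r l, brun w r l /\ forall N, exists i, N <= i /\ baccepting (r i).

End FDFA.

Definition decomposition (Sigma : Type) (w : nat -> Sigma)
    (u v : seq Sigma) : Prop :=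
  0 < size v /\
  forall n, mkseq w (size u + n * size v) = u ++ flatten (nseq n v).

Definition ultimately_periodic (Sigma : Type) (w : nat -> Sigma) : Prop :=
  exists u v, decomposition w u v.

From HB Require Import structures.
From mathcomp Require Import all_boot zify.
From Stdlib Require Import Classical.
Set Implicit Arguments. Unset Strict Implicit. Unset Printing Implicit Defensive.

(* A run of B-bar that enters the component of some (u, v) never leaves it,
   and each passage from its state f back to f reads a loop word:
   one that leads M from u back to u and A^u from s_u into F_u. The first
   coordinate of every state follows M along the word read so far, so M is in
   state u whenever f is visited. An accepting run visits f after reading
   arbitrarily long prefixes of w = x y^omega; pick two visits, after prefixes
   of lengths c1 < c2 with |x| <= c1 and c1 = c2 mod |y|. Then w[0, c1) and
   w[c1, c2) decompose w, and w[c1, c2) is the concatenation of the loop words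
   read between the two visits. *)

Section Words.
Variables (T : Type) (w : nat -> T).

Lemma mkseqD m n : mkseq w (m + n) = mkseq w m ++ map w (iota m n).
Proof. by rewrite /mkseq iotaD map_cat. Qed.

Lemma decomposition_periodic x y : decomposition w x y ->
  forall t, size x <= t -> w (t + size y) = w t.
Proof.
move=> [y_gt0 dec] t le_xt.
have w_nth n i : i < size x + n * size y ->
    w i = nth (w 0) (x ++ flatten (nseq n y)) i.
  by move=> lt_i; rewrite -dec nth_mkseq.
rewrite (w_nth t.+2 (t + size y)) ?(w_nth t.+1 t); try nia.
rewrite -[flatten (nseq t.+2 y)]/(y ++ flatten (nseq t.+1 y)).
rewrite [LHS]nth_cat [RHS]nth_cat !ltnNge le_xt (leq_trans le_xt (leq_addr _ _)) /=.
by rewrite -addnBAC // nth_cat ltnNge leq_addl addnK.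
Qed.

Lemma periodic_iter a p : (forall t, a <= t -> w (t + p) = w t) ->
  forall m t, a <= t -> w (t + m * p) = w t.
Proof.
move=> per; elim=> [|m IHm] t le_at; first by rewrite addn0.
by rewrite mulSn addnCA addnC per ?IHm //; lia.
Qed.

Lemma decomposition_prefix x y u v : decomposition w x y ->
  size x <= size u -> 0 < size v -> size y %| size v ->
  mkseq w (size u + size v) = u ++ v -> decomposition w u v.
Proof.
move=> dec le_xu v_gt0 /dvdnP[k v_mul] prefix; split=> // n.
have per := periodic_iter (decomposition_periodic dec).
have u_def : mkseq w (size u) = u.
  by move/(congr1 (take (size u))): prefix; rewrite mkseqD !take_size_cat ?size_mkseq.
have v_def : map w (iota (size u) (size v)) = v.
  by move/(congr1 (drop (size u))): prefix; rewrite mkseqD !drop_size_cat ?size_mkseq.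
elim: n => [|n IHn]; first by rewrite addn0 cats0 u_def.
rewrite mulSn addnCA addnC mkseqD IHn -addn1 nseqD flatten_cat /= cats0 -catA.
congr (_ ++ (_ ++ _)); rewrite -[in RHS]v_def addnC iotaDl -map_comp.
apply/eq_in_map => t; rewrite mem_iota => /andP[le_ut _] /=.
by rewrite addnC v_mul mulnA per //; lia.
Qed.

End Words.

Lemma unbounded_residue (S : nat -> Prop) p : 0 < p ->
  (forall N, exists2 c, N <= c & S c) ->
  exists k, forall N, exists2 c, N <= c & S c /\ c %% p = k.
Proof.
move=> p_gt0 unbounded; apply: NNPP => no_residue.
have bound k : exists B, forall c, B <= c -> S c -> k <= c %% p.
  elim: k => [|k [B IHk]]; first by exists 0.
  have [N HN] : exists N, forall c, N <= c -> S c -> c %% p <> k.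
    apply: NNPP => bounded; apply: no_residue; exists k => N.
    apply: NNPP => no_c; apply: bounded; exists N => c le_Nc Sc mod_c.
    by apply: no_c; exists c.
  exists (maxn B N) => c; rewrite geq_max => /andP[le_Bc le_Nc] Sc.
  by rewrite ltn_neqAle eq_sym IHk // andbT; apply/eqP/HN.
have [B HB] := bound p; have [c le_Bc Sc] := unbounded B.
by have := HB c le_Bc Sc; rewrite leqNgt ltn_mod p_gt0.
Qed.

Definition consumed (A : Type) (l : nat -> option A) (i : nat) : seq A :=
  pmap l (iota 0 i).

Lemma consumedD (A : Type) (l : nat -> option A) i d :
  consumed l (i + d) = consumed l i ++ pmap l (iota i d).
Proof. by rewrite /consumed iotaD pmap_cat. Qed.

Lemma consumedS (A : Type) (l : nat -> option A) i :
  consumed l i.+1 = consumed l i ++ seq_of_opt (l i).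
Proof. by rewrite -addn1 consumedD /=; case: (l i). Qed.

Lemma size_consumed_mono (A : Type) (l : nat -> option A) i j :
  i <= j -> size (consumed l i) <= size (consumed l j).
Proof. by move/subnKC <-; rewrite consumedD size_cat leq_addr. Qed.

Lemma size_consumed_ltn (A : Type) (l : nat -> option A) i j :
  size (consumed l i) < size (consumed l j) -> i < j.
Proof. by apply: contraTT; rewrite -!leqNgt; apply: size_consumed_mono. Qed.

Section ConsumedPrefix.
Variables (A : Type) (w : nat -> A) (l : nat -> option A) (pos : nat -> nat).
Hypotheses (pos_incr : forall k, pos k < pos k.+1)
  (l_pos : forall k, l (pos k) = Some (w k))
  (l_off : forall j, (forall k, pos k <> j) -> l j = None).

Lemma pmap_off (s : seq nat) :
  (forall j k, j \in s -> pos k <> j) -> pmap l s = [::].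
Proof.
elim: s => //= j s IHs off.
rewrite l_off => [|k]; last by apply: off; rewrite mem_head.
by rewrite IHs // => i k si; apply: off; rewrite in_cons si orbT.
Qed.

Lemma consumed_pos k : consumed l (pos k) = mkseq w k.
Proof.
have pos_le : {homo pos : m n / m <= n}.
  by apply: ltnW_homo; apply: homo_ltn pos_incr; apply: ltn_trans.
elim: k => [|k IHk].
  rewrite /consumed pmap_off // => j k; rewrite mem_iota /= => lt_j.
  by have := pos_le 0 k (leq0n k); lia.
rewrite -(subnKC (pos_incr k)) addSn -addnS consumedD /= l_pos /= IHk mkseqS -cats1.
congr (_ ++ _ :: _); apply: pmap_off => j k'; rewrite mem_iota => /andP[lt_j lt_j'] eq_j.
rewrite subnKC // -{}eq_j in lt_j lt_j'.
by case: (leqP k' k) => [/pos_le | /pos_le]; lia.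
Qed.

Lemma consumed_prefix i : consumed l i = mkseq w (size (consumed l i)).
Proof.
elim: i => [|i IHi] //; rewrite consumedS.
case E: (l i) => [a|] /=; last by rewrite cats0.
have [k pos_k] : exists k, pos k = i.
  by apply: NNPP => no_pos; rewrite l_off in E => // k eq_k; apply: no_pos; exists k.
move: E; rewrite -pos_k l_pos consumed_pos => -[<-].
by rewrite size_cat size_mkseq addn1 mkseqS cats1.
Qed.

Lemma consumed_unbounded (P : nat -> Prop) :
  (forall N, exists i, N <= i /\ P i) ->
  forall N, exists2 c, N <= c & exists i, P i /\ size (consumed l i) = c.
Proof.
move=> P_unbounded N; have [i [le_i Pi]] := P_unbounded (pos N).
exists (size (consumed l i)); last by exists i.
by rewrite -[N](size_mkseq w) -consumed_pos size_consumed_mono.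
Qed.

End ConsumedPrefix.

Section Runs.
Variables (Sigma : finType) (F : fdfa Sigma).
Implicit Types (q : lstate F) (x y : bstate F) (s : seq Sigma).

Definition lead_state x : lstate F :=
  match x with
  | BQ q => q
  | BP u _ _ None => u
  | BP _ _ _ (Some (p, _)) => p
  end.

Lemma bstep_lead x o y : bstep x o y ->
  lead_state y = foldl (@ltrans _ F) (lead_state x) (seq_of_opt o).
Proof. by case. Qed.

Definition loop_word q s := Alang q s /\ foldl (@ltrans _ F) q s = q.

(* The word read since some visit of f in component (q, v) is [flatten vs ++ s]:
   the loop words [vs] completed since then, and the word [s] read since the
   last visit of s_P, whose runs in M and A^q give the current product state. *)
Definition in_component q x (vs : seq (seq Sigma)) s : Prop :=
  match x with
  | BQ _ => False
  | BP u _ _ o =>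
      [/\ u = q, forall vi, vi \in vs -> loop_word u vi &
          if o is Some (p, t) then foldl (@ltrans _ F) u s = p /\ Arun u s = t
          else s = [::]]
  end.

Lemma bstep_in_component q x o y vs s : bstep x o y -> in_component q x vs s ->
  exists vs' s', in_component q y vs' s' /\
    flatten vs' ++ s' = flatten vs ++ s ++ seq_of_opt o.
Proof.
case=> [p a | u v hv | u v hv p t a | u v hv | u v hv] //=.
- move=> [<- loops [<- <-]]; exists vs, (rcons s a).
  by rewrite /= /Arun !foldl_rcons cats1.
- move=> [<- loops [reach acc]]; exists (rcons vs s), [::]; split.
    split=> // vi; rewrite mem_rcons in_cons => /predU1P[->|/loops //].
    by rewrite /loop_word /Alang acc reach.
  by rewrite !cats0 flatten_rcons.
- by move=> [<- loops ->]; exists vs, [::].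
Qed.

Section RunFacts.
Variables (r : nat -> bstate F) (l : nat -> option Sigma).
Hypothesis r_step : forall i, bstep (r i) (l i) (r i.+1).

Lemma lead_state_run i :
  lead_state (r i) = foldl (@ltrans _ F) (lead_state (r 0)) (consumed l i).
Proof.
by elim: i => [|i IHi] //; rewrite consumedS foldl_cat -IHi -(bstep_lead (r_step i)).
Qed.

Lemma in_component_run i u v hv : r i = @BP _ F u v hv None -> forall d,
  exists vs s, in_component u (r (i + d)) vs s /\ pmap l (iota i d) = flatten vs ++ s.
Proof.
move=> r_i; elim=> [|d [vs [s [comp read]]]]; first by exists [::], [::]; rewrite addn0 r_i.
have [vs' [s' [comp' read']]] := bstep_in_component (r_step (i + d)) comp.
exists vs', s'; rewrite -(addn1 d) iotaD addnA addn1 pmap_cat read read' -catA.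
by split=> //; case: (l (i + d)).
Qed.

Lemma accepting_segment i j : i <= j ->
  baccepting (r i) -> baccepting (r j) ->
  exists vs, consumed l j = consumed l i ++ flatten vs /\
    forall vi, vi \in vs -> loop_word (lead_state (r i)) vi.
Proof.
move/subnKC=> <-; case r_i: (r i) => [|u v hv [[]|]] //= _.
have [vs [s [comp read]]] := in_component_run r_i (j - i).
move: comp read; case: (r (i + (j - i))) => [|u' v' hv' [[]|]] //= [<- loops ->].
by rewrite cats0 => read _; exists vs; rewrite consumedD read.
Qed.

End RunFacts.
End Runs.

Theorem lemma5 (Sigma : finType) (F : fdfa Sigma) (w : nat -> Sigma) :
  ultimately_periodic w -> baccepts F w ->
  exists (u v : seq Sigma) (vs : seq (seq Sigma)),
    [/\ decomposition w u v,
        1 <= size vs,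
        v = flatten vs &
        forall vi, vi \in vs ->
          Alang (Mrun F u) vi /\ Mrun F (u ++ vi) = Mrun F u].
Proof.
move=> [x [y dec]] [r [l [[r0 r_step [pos [pos_incr l_pos l_off]]] acc]]].
have [k residue] :=
  unbounded_residue (proj1 dec) (consumed_unbounded pos_incr l_pos l_off acc).
have [c1 le_x [[i [acc_i size_i]] mod_i]] := residue (size x); subst c1.
have [c2 lt_ij [[j [acc_j size_j]] mod_j]] := residue (size (consumed l i)).+1.
subst c2; have le_ij := ltnW (size_consumed_ltn lt_ij).
have [vs [consumed_j loops]] := accepting_segment r_step le_ij acc_i acc_j.
have v_gt0 : 0 < size (flatten vs) by move: lt_ij; rewrite consumed_j size_cat; lia.
exists (consumed l i), (flatten vs), vs; split=> //.
- apply: decomposition_prefix dec le_x v_gt0 _ _.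
    have -> : size (flatten vs) = size (consumed l j) - size (consumed l i).
      by rewrite consumed_j size_cat addKn.
    by rewrite -eqn_mod_dvd ?mod_i ?mod_j // ltnW.
  by rewrite -size_cat -consumed_j -(consumed_prefix pos_incr l_pos l_off).
- by case: vs {consumed_j loops} v_gt0.
- move=> vi /loops; rewrite (lead_state_run r_step) r0 => -[accepts loop].
  by rewrite /Mrun foldl_cat loop.
Qed.
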